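(* Let $\mathcal{T}\in\mathbb{K}^{R\times R\times K}$ be slice mix invertible, let $\mathbf{U}\in\mathbb{K}^{K\times K}$ be invertible, and set $\mathcal{S}=\mathcal{T}\cdot_3\mathbf{U}$ with frontal slices $\mathbf{S}_k=\mathcal{S}(:,:,k)$. If $\mathcal{T}$ has a JGE value of algebraic multiplicity $m$, then for any $i\neq j$ the subpencil $(\mathbf{S}_i,\mathbf{S}_j)$ (viewed as a tensor in $\mathbb{K}^{R\times R\times 2}$) has a JGE value of algebraic multiplicity at least $m$.
   Context: $\mathbb{K}$ denotes $\mathbb{R}$ or $\mathbb{C}$. $\mathcal{T}\cdot_3\mathbf{U}$ is defined by $(\mathcal{T}\cdot_3\mathbf{U})(a,b,:)=\mathbf{U}\,\mathcal{T}(a,b,:)$, i.e. $\mathbf{S}_k=\sum_l U_{kl}\mathbf{T}_l$. For $\mathcal{X}\in\mathbb{K}^{R\times R\times L}$ with slices $\mathbf{X}_k$: slice mix invertible means some linear combination of slices is invertible; $p_{\mathcal{X}}(\boldsymbol{\gamma})=\det(\sum_k\gamma_k\mathbf{X}_k)$; for nonzero $\boldsymbol{\lambda}\in\mathbb{K}^L$ the algebraic multiplicity of $\mathrm{span}(\boldsymbol{\lambda})$ is the largest $m$ with $(\sum_k\lambda_k\gamma_k)^m\mid p_{\mathcal{X}}$, and $\mathrm{span}(\boldsymbol{\lambda})$ is a JGE value (of that algebraic multiplicity) when this is positive. *)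

From HB Require Import structures.
From mathcomp Require Import all_boot all_order all_algebra.
From mathcomp Require Import mpoly.
Set Implicit Arguments. Unset Strict Implicit. Unset Printing Implicit Defensive.
Import Order.TTheory GRing.Theory Num.Theory.
Local Open Scope ring_scope.

(* A third-order tensor X in K^{R x R x L} is given by its frontal slices
   X k = X(:,:,k), k : 'I_L. *)

Definition mdvd (F : fieldType) (L : nat) (f p : {mpoly F[L]}) : Prop :=
  exists q : {mpoly F[L]}, p = q * f.

Definition slice_mix_invertible (F : fieldType) (R L : nat)
  (X : 'I_L -> 'M[F]_R) : Prop :=
  exists g : 'I_L -> F, (\sum_(k < L) g k *: X k) \in unitmx.

Definition pX (F : fieldType) (R L : nat) (X : 'I_L -> 'M[F]_R) : {mpoly F[L]} :=
  \det (\matrix_(a < R, b < R) \sum_(k < L) 'X_k * (X k a b)%:MP).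

Definition linform (F : fieldType) (L : nat) (lam : 'I_L -> F) : {mpoly F[L]} :=
  \sum_(k < L) (lam k)%:MP * 'X_k.

Definition pow_divides (F : fieldType) (R L : nat) (X : 'I_L -> 'M[F]_R)
  (lam : 'I_L -> F) (m : nat) : Prop :=
  mdvd (linform lam ^+ m) (pX X).

Definition alg_mult_eq (F : fieldType) (R L : nat) (X : 'I_L -> 'M[F]_R)
  (lam : 'I_L -> F) (m : nat) : Prop :=
  pow_divides X lam m /\ ~ pow_divides X lam m.+1.

Definition has_JGE_value_mult (F : fieldType) (R L : nat) (X : 'I_L -> 'M[F]_R)
  (m : nat) : Prop :=
  exists lam : 'I_L -> F, (exists k, lam k != 0) /\ (0 < m)%N /\ alg_mult_eq X lam m.

Definition has_JGE_value_mult_ge (F : fieldType) (R L : nat) (X : 'I_L -> 'M[F]_R)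
  (m : nat) : Prop :=
  exists lam : 'I_L -> F, (exists k, lam k != 0) /\ (0 < m)%N /\ pow_divides X lam m.

Definition mode3 (F : fieldType) (R L : nat) (T : 'I_L -> 'M[F]_R)
  (U : 'M[F]_L) : 'I_L -> 'M[F]_R :=
  fun k => \sum_(l < L) U k l *: T l.

Definition subpencil (F : fieldType) (R L : nat) (S : 'I_L -> 'M[F]_R)
  (i j : 'I_L) : 'I_2 -> 'M[F]_R :=
  fun t => if t == ord0 then S i else S j.

(* The linear substitution gamma_l := sum_t V_tl gamma'_t is a ring morphism
   of polynomial rings mapping p_X to p_(X ._3 V) and the linear form of lambda
   to that of V lambda.  Applied to the 2 x K matrix V of rows i and j of U, it
   turns (sum_k lambda_k gamma_k)^m | p_T into the same divisibility for the
   subpencil and V lambda.  If V lambda vanishes, that divisibility says p_S = 0,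
   and then every nonzero lambda works. *)
From HB Require Import structures.
From mathcomp Require Import all_boot all_order all_algebra.
From mathcomp Require Import mpoly.
Set Implicit Arguments. Unset Strict Implicit. Unset Printing Implicit Defensive.
Import GRing.Theory.
Local Open Scope ring_scope.

Section LinearSubstitution.

Variables (F : fieldType) (R L L' : nat).

Definition slice_mix (V : 'M[F]_(L', L)) (X : 'I_L -> 'M[F]_R) : 'I_L' -> 'M[F]_R :=
  fun t => \sum_(l < L) V t l *: X l.

Definition linsubst (V : 'M[F]_(L', L)) : {mpoly F[L]} -> {mpoly F[L']} :=
  comp_mpoly [tuple linform (fun t => V t l) | l < L].

HB.instance Definition _ (V : 'M[F]_(L', L)) := GRing.RMorphism.on (linsubst V).

Lemma linsubstX (V : 'M[F]_(L', L)) l : linsubst V 'X_l = linform (fun t => V t l).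
Proof. by rewrite /linsubst comp_mpolyXU -tnth_nth tnth_mktuple. Qed.

Lemma linsubstC (V : 'M[F]_(L', L)) c : linsubst V c%:MP = c%:MP.
Proof. exact: comp_mpolyC. Qed.

Lemma linsubst_linform (V : 'M[F]_(L', L)) (lam : 'I_L -> F) :
  linsubst V (linform lam) = linform (fun t => \sum_(l < L) V t l * lam l).
Proof.
rewrite /linform raddf_sum /=.
under eq_bigr => l _ do
  rewrite rmorphM /= linsubstC linsubstX /linform mulr_sumr.
rewrite exchange_big /=; apply: eq_bigr => t _.
rewrite raddf_sum mulr_suml /=; apply: eq_bigr => l _.
by rewrite mulrA -mpolyCM (mulrC (lam l)).
Qed.

Lemma pX_slice_mix (V : 'M[F]_(L', L)) (X : 'I_L -> 'M[F]_R) :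
  pX (slice_mix V X) = linsubst V (pX X).
Proof.
rewrite /pX -det_map_mx; congr (\det _); apply/matrixP => a b.
rewrite !mxE raddf_sum /=.
under [RHS]eq_bigr => l _ do
  rewrite rmorphM /= linsubstC linsubstX /linform mulr_suml.
rewrite [RHS]exchange_big /=; apply: eq_bigr => t _.
rewrite /slice_mix summxE !raddf_sum mulr_sumr /=; apply: eq_bigr => l _.
by rewrite mxE mpolyCM mulrCA mulrA.
Qed.

Lemma pow_divides_slice_mix (V : 'M[F]_(L', L)) (X : 'I_L -> 'M[F]_R) lam m :
  pow_divides X lam m ->
  pow_divides (slice_mix V X) (fun t => \sum_(l < L) V t l * lam l) m.
Proof.
move=> [q pXE]; exists (linsubst V q).
by rewrite pX_slice_mix pXE rmorphM rmorphXn /= linsubst_linform.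
Qed.

Lemma eq_pX (X Y : 'I_L -> 'M[F]_R) : X =1 Y -> pX X = pX Y.
Proof.
move=> XY; congr (\det _); apply/matrixP => a b.
by rewrite !mxE; under eq_bigr do rewrite XY.
Qed.

Lemma pow_divides_pX0 (X : 'I_L -> 'M[F]_R) lam m :
  pX X = 0 -> pow_divides X lam m.
Proof. by move=> pX0; exists 0; rewrite pX0 mul0r. Qed.

Lemma linform_eq0 (lam : 'I_L -> F) :
  (forall k, lam k = 0) -> linform lam = 0.
Proof. by move=> lam0; rewrite /linform big1 // => k _; rewrite lam0 mpolyC0 mul0r. Qed.

End LinearSubstitution.

Lemma has_JGE_value_mult_ge_slice_mix (F : fieldType) (R L L' : nat)
    (V : 'M[F]_(L'.+1, L)) (X : 'I_L -> 'M[F]_R) lam m :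
  (0 < m)%N -> pow_divides X lam m -> has_JGE_value_mult_ge (slice_mix V X) m.
Proof.
move=> m_gt0 /(pow_divides_slice_mix V) dvdVX.
set lamV := fun t => _ in dvdVX.
have [/existsP[t lamVt_nz] | /existsPn lamV0] := boolP [exists t, lamV t != 0].
  by exists lamV; split; [exists t | split].
exists (fun=> 1); split; first by exists ord0; rewrite oner_eq0.
split=> //; apply: pow_divides_pX0.
case: dvdVX => q ->; rewrite linform_eq0 => [|t]; last exact/eqP/negPn/lamV0.
by rewrite expr0n gtn_eqF // mulr0.
Qed.

Lemma subpencil_mode3E (F : fieldType) (R K : nat) (T : 'I_K -> 'M[F]_R)
    (U : 'M[F]_K) (i j : 'I_K) :
  subpencil (mode3 T U) i j =1
  slice_mix (rowsub (fun t : 'I_2 => if t == ord0 then i else j) U) T.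
Proof.
by move=> t; rewrite /subpencil /slice_mix; under [RHS]eq_bigr do rewrite mxE; case: ifP.
Qed.

Theorem proposition5p1 (F : numFieldType) (R K : nat) (m : nat)
  (T : 'I_K -> 'M[F]_R) (U : 'M[F]_K) :
  slice_mix_invertible T ->
  U \in unitmx ->
  has_JGE_value_mult T m ->
  forall i j : 'I_K, i != j ->
  has_JGE_value_mult_ge (subpencil (mode3 T U) i j) m.
Proof.
move=> _ _ [lam [_ [m_gt0 [dvd_pT _]]]] i j _.
pose V := rowsub (fun t : 'I_2 => if t == ord0 then i else j) U.
have [lamS [lamS_nz [_ dvd_pS]]] :=
  has_JGE_value_mult_ge_slice_mix V m_gt0 dvd_pT.
exists lamS; split=> //; split=> //.
by rewrite /pow_divides (eq_pX (subpencil_mode3E T U i j)).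
Qed.
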